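(* For any $S_1,S,T_1,T\in\mathfrak S_1(\mathbb T)$ with $S_1\le S$ and $T_1\le T$, $$d(S-S_1,T-T_1)\le d(S_1,T_1)+d(S,T).$$
   Context: A rigged subset $S$ of a set $X$ assigns to each $x$ a multiplicity $\mathrm{mult}(x;S)\in\{0,1,\dots,\infty\}$; $S\le T$ means $\mathrm{mult}(x;S)\le\mathrm{mult}(x;T)$ for all $x$; $S\pm T$ are defined by adding/subtracting multiplicities (difference when $T\le S$). An enumeration is a sequence in which each $x$ appears $\mathrm{mult}(x;S)$ times. $\mathfrak S_\infty(\mathbb T)$ consists of countable rigged subsets of the unit circle $\mathbb T$ (arc-length metric) in which $1$ has multiplicity $\infty$ and with no other accumulation point (counting multiplicity); $d(S,T)=\inf\sum_j\mathrm{dist}(s_j,t_j)$ over enumerations of $S,T$; $\mathfrak S_1(\mathbb T)=\{S: d(S,\mathbf 1)<\infty\}$, $\mathbf 1$ being $1$ with infinite multiplicity. The point $1$ is always regarded as having infinite multiplicity (so differences are again in $\mathfrak S_1(\mathbb T)$). *)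

From HB Require Import structures.
From mathcomp Require Import all_boot all_order all_algebra.
From mathcomp Require Import all_classical all_reals all_analysis.
Set Implicit Arguments. Unset Strict Implicit. Unset Printing Implicit Defensive.
Import Order.TTheory GRing.Theory Num.Theory.
Import numFieldNormedType.Exports.
Local Open Scope classical_set_scope.
Local Open Scope ring_scope.

(* The unit circle T, parametrized by the angle theta in [0, 2 pi):
   the point is exp(i theta); the point 1 is theta = 0. *)
Record circ (R : realType) := Circ {
  ang : R;
  ang_ge0 : 0 <= ang;
  ang_lt : ang < 2 * pi }.

Definition circ1 (R : realType) : circ R :=
  @Circ R 0 (lexx 0) (mulr_gt0 (ltr0Sn R 1) (pi_gt0 R)).

Definition cdist (R : realType) (x y : circ R) : R :=
  Num.min `|ang x - ang y| (2 * pi - `|ang x - ang y|).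

(* multiplicities in {0,1,...,oo}: Some n = n, None = oo *)
Definition mlt := option nat.

Definition mlt_le (a b : mlt) : Prop :=
  match a, b with
  | _, None => True
  | None, Some _ => False
  | Some m, Some n => (m <= n)%N
  end.

Definition mlt_sub (a b : mlt) : mlt :=
  match a, b with
  | None, _ => None
  | Some m, Some n => Some (m - n)%N
  | Some _, None => Some 0%N
  end.

(* A rigged subset of the circle: its multiplicity function. *)
Definition rigged (R : realType) := circ R -> mlt.

Definition rle (R : realType) (S T : rigged R) : Prop :=
  forall x, mlt_le (S x) (T x).

(* Difference S - T (used when T <= S); the point 1 is always regarded
   as having infinite multiplicity. *)
Definition rsub (R : realType) (S T : rigged R) : rigged R :=
  fun x => if pselect (x = circ1 R) then None else mlt_sub (S x) (T x).

Definition rone (R : realType) : rigged R :=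
  fun x => if pselect (x = circ1 R) then None else Some 0%N.

(* S in S_oo(T): countable, 1 has multiplicity oo, and no other
   accumulation point counting multiplicity: every x <> 1 has a
   neighbourhood of finite total multiplicity. *)
Definition in_Soo (R : realType) (S : rigged R) : Prop :=
  [/\ countable [set x | S x <> Some 0%N],
      S (circ1 R) = None &
      forall x, x <> circ1 R -> exists2 r : R, 0 < r &
        finite_set [set y | cdist x y < r /\ S y <> Some 0%N] /\
        (forall y, cdist x y < r -> S y <> None)].

Definition occurs (R : realType) (s : nat -> circ R) (x : circ R) (m : mlt)
  : Prop :=
  match m with
  | Some n => exists l : seq nat, [/\ uniq l, size l = n &
                 forall j, s j = x <-> j \in l]
  | None => forall N, exists2 j, (N <= j)%N & s j = x
  end.

Definition enumeration (R : realType) (S : rigged R) (s : nat -> circ R)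
  : Prop := forall x, occurs s x (S x).

Local Open Scope ereal_scope.

Definition rdist (R : realType) (S T : rigged R) : \bar R :=
  ereal_inf [set v | exists s t, [/\ enumeration S s, enumeration T t &
     v = \sum_(j <oo) (cdist (s j) (t j))%:E]].

Definition in_S1 (R : realType) (S : rigged R) : Prop :=
  in_Soo S /\ rdist S (@rone R) < +oo.

From HB Require Import structures.
From mathcomp Require Import all_boot all_order all_algebra.
From mathcomp Require Import all_classical all_reals all_analysis.
From mathcomp Require Import lra.
Set Implicit Arguments. Unset Strict Implicit. Unset Printing Implicit Defensive.
Import Order.TTheory GRing.Theory Num.Theory.
Local Open Scope ring_scope.

(* Take enumerations s1, t1 of S1, T1 and s, t of S, T that realise d(S1, T1) and
   d(S, T) up to epsilon.  As S1 <= S, the sequence s1 embeds into s along an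
   injection phi with s (phi k) = s1 k, and likewise t1 into t along psi.  Link the
   index j to phi k whenever t j = t1 k: each index has at most one successor and
   one predecessor, so the indices split into paths and cycles.  A path starts at an
   index outside the range of phi, i.e. at a point of S - S1, and if it stops, it
   stops at an index outside the range of psi, i.e. at a point of T - T1.  Pairing
   the two ends of every path, and the free end of every infinite path with 1,
   enumerates S - S1 and T - T1 simultaneously.  By the triangle inequality a pair
   costs at most the sum over its path of d(s j, t j) + d(s1 k, t1 k) (up to an
   arbitrarily small error for infinite paths, along which s tends to 1), and the
   paths are disjoint. *)

Section CircleDistance.
Variable R : realType.
Implicit Types x y z : circ R.

Lemma cdist_ge0 x y : 0 <= cdist x y.
Proof.
rewrite /cdist; case: x y => a a0 a1 [b b0 b1] /=.
have p0 := pi_gt0 R.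
case: (ltP `|a - b| (2 * pi - `|a - b|)) => _; first exact: normr_ge0.
case: (lerP 0 (a - b)) => h; [rewrite ger0_norm // | rewrite ltr0_norm //]; lra.
Qed.

Lemma cdistxx x : cdist x x = 0.
Proof.
rewrite /cdist subrr normr0 subr0.
have p0 := pi_gt0 R.
case: ltP => //; lra.
Qed.

Lemma cdistC x y : cdist x y = cdist y x.
Proof. by rewrite /cdist distrC. Qed.

Lemma minr_cases (a b : R) :
  (Num.min a b = a /\ a <= b) \/ (Num.min a b = b /\ b <= a).
Proof. by rewrite minr_absE; case: (lerP a b) => h; [left | right]; split; lra. Qed.

Lemma cdist_triangle x y z : cdist x z <= cdist x y + cdist y z.
Proof.
rewrite /cdist; case: x y z => a a0 a1 [b b0 b1] [c c0 c1] /=.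
have p0 := pi_gt0 R.
case: (minr_cases `|a - c| (2 * pi - `|a - c|)) => [[-> e3]|[-> e3]];
case: (minr_cases `|a - b| (2 * pi - `|a - b|)) => [[-> e1]|[-> e1]];
case: (minr_cases `|b - c| (2 * pi - `|b - c|)) => [[-> e2]|[-> e2]];
move: e1 e2 e3;
case: (lerP 0 (a - b)) => h1; rewrite ?(ger0_norm h1) ?(ltr0_norm h1);
case: (lerP 0 (b - c)) => h2; rewrite ?(ger0_norm h2) ?(ltr0_norm h2);
case: (lerP 0 (a - c)) => h3; rewrite ?(ger0_norm h3) ?(ltr0_norm h3);
move=> e1 e2 e3; lra.
Qed.

End CircleDistance.

Lemma inj_nat_avoid (g : nat -> nat) (F : seq nat) :
  injective g -> exists n, g n \notin F.
Proof.
move=> ginj; apply/not_existsP => /= gF.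
have sub : {subset map g (iota 0 (size F).+1) <= F}.
  by move=> x /mapP [n _ ->]; have := gF n; case: (g n \in F).
have := uniq_leq_size _ sub.
rewrite map_inj_uniq ?iota_uniq // size_map size_iota ltnn.
by move=> /(_ isT).
Qed.

Lemma notin_gt_max (L : seq nat) j : (\max_(i <- L) i < j)%N -> j \notin L.
Proof.
move=> Lj; apply/negP => jL.
by have := leq_ltn_trans (leq_bigmax_seq _ jL isT) Lj; rewrite ltnn.
Qed.

Section NonnegativeSeries.
Variable R : realType.
Implicit Types (f : nat -> R) (L : seq nat).

Lemma big_uniq_le_nneseries f L : (forall j, 0 <= f j) -> uniq L ->
  ((\sum_(j <- L) f j)%:E <= \sum_(j <oo) (f j)%:E)%E.
Proof.
move=> f0 uL; set M := (\max_(j <- L) j).+1.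
have LM : perm_eq L [seq j <- index_iota 0 M | j \in L].
  apply: uniq_perm => //; first by rewrite filter_uniq // iota_uniq.
  move=> j; rewrite mem_filter mem_index_iota /M ltnS.
  by case jL: (j \in L) => //=; rewrite (leq_bigmax_seq _ jL).
apply: (@le_trans _ _ (\sum_(0 <= j < M) f j)%:E).
  rewrite lee_fin (perm_big _ LM) big_filter /= big_mkcond /=.
  by apply: ler_sum => j _; case: ifP.
rewrite -sumEFin; apply: nneseries_lim_ge => n _ _; rewrite lee_fin; exact: f0.
Qed.

Lemma nneseries_le_ub f (M : \bar R) : (forall j, 0 <= f j) ->
  (forall N, ((\sum_(0 <= j < N) f j)%:E <= M)%E) ->
  (\sum_(j <oo) (f j)%:E <= M)%E.
Proof.
move=> f0 fM; apply: lime_le; first by apply: is_cvg_nneseries => n _ _; rewrite lee_fin.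
by apply: nearW => N; rewrite sumEFin.
Qed.

Lemma nneseries_large_terms_finite f : (forall j, 0 <= f j) ->
  (\sum_(j <oo) (f j)%:E < +oo)%E ->
  forall e, 0 < e -> exists F : seq nat, forall j, e <= f j -> j \in F.
Proof.
move=> f0 fin e e0.
have /cvgrPdist_lt/(_ e e0) [N _ fN] := cvg_series_cvg_0 (nnseries_is_cvg f0 fin).
exists (iota 0 N) => j ej; rewrite mem_iota add0n leq0n /= ltnNge.
by apply/negP => /fN; rewrite /= sub0r normrN ger0_norm //; lra.
Qed.

End NonnegativeSeries.

Section Enumerations.
Variable R : realType.
Implicit Types (S : rigged R) (s : nat -> circ R).

Lemma enum_notin S s x j : enumeration S s -> S x = Some 0%N -> s j <> x.
Proof.
move=> es Sx sj; have := es x; rewrite Sx => -[l [_ sl hl]].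
by have := (hl j).1 sj; case: l sl {hl}.
Qed.

Lemma enum_hit S s x : enumeration S s -> S x <> Some 0%N -> exists j, s j = x.
Proof.
move=> es; have := es x; case: (S x) => [n|].
  move=> [[|j l] [_ sl hl]] n0; first by rewrite -sl in n0.
  by exists j; apply/(hl j).2; rewrite inE eqxx.
by move=> h _; have [j _ sj] := h 0%N; exists j.
Qed.

Lemma enum_rone r : enumeration (@rone R) r -> forall j, r j = circ1 R.
Proof.
move=> er j; apply: contrapT => rj.
have r0 : rone (r j) = Some 0%N by rewrite /rone; case: pselect.
exact: enum_notin er r0 erefl.
Qed.

Section Embedding.
Variables (S1 S : rigged R) (s1 s : nat -> circ R).
Hypotheses (es1 : enumeration S1 s1) (es : enumeration S s) (S1S : rle S1 S).

Lemma enum_extend (L : seq nat) : uniq L ->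
  (forall i, (i < size L)%N -> s (nth 0%N L i) = s1 i) ->
  exists j, s j = s1 (size L) /\ j \notin L.
Proof.
move=> uL Ls1; set k := size L; set x := s1 k.
have := S1S x; have := es x; have := es1 x; case: (S x) => [m|]; last first.
  move=> _ sx _; have [j jL sj] := sx (\max_(j <- L) j).+1.
  by exists j; split; last exact: notin_gt_max.
case: (S1 x) => [m1|] // [l1 [ul1 sl1 hl1]] [l [ul sl hl]] /= m1m.
apply: contrapT => noj.
have lL j : j \in l -> j \in L.
  move=> jl; apply: contrapT => jL; apply: noj.
  by exists j; split; [exact/(hl j).2 | exact/negP].
pose K := [seq i <- iota 0 k | `[< s1 i = x >]].
have l_sub : {subset l <= map (nth 0%N L) K}.
  move=> j jl; have jL := lL j jl.
  apply/mapP; exists (index j L); last by rewrite nth_index.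
  rewrite mem_filter mem_iota add0n /k index_mem jL leq0n !andbT; apply/asboolP.
  by rewrite -Ls1 ?index_mem // nth_index //; exact: (hl j).2.
have kK_sub : {subset k :: K <= l1}.
  move=> i; rewrite inE => /orP [/eqP ->|]; first exact: (hl1 k).1.
  by rewrite mem_filter => /andP [/asboolP si _]; exact: (hl1 i).1.
have ukK : uniq (k :: K).
  by rewrite /= filter_uniq ?iota_uniq // andbT mem_filter mem_iota ltnn !andbF.
have := uniq_leq_size ul l_sub; have := uniq_leq_size ukK kK_sub.
by rewrite size_map /= sl sl1 => lt1 le1; have := leq_trans lt1 m1m; rewrite ltnNge le1.
Qed.

Lemma enum_embed : exists2 phi : nat -> nat, injective phi & forall k, s (phi k) = s1 k.
Proof.
pose pick (L : seq nat) := xget 0%N [set j | s j = s1 (size L) /\ j \notin L].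
have pickP L : uniq L -> (forall i, (i < size L)%N -> s (nth 0%N L i) = s1 i) ->
    s (pick L) = s1 (size L) /\ pick L \notin L.
  move=> uL Ls1.
  exact: (xgetPex 0%N (P := [set j | s j = s1 (size L) /\ j \notin L]) (enum_extend uL Ls1)).
pose phis := fix phis n := if n is n'.+1 then rcons (phis n') (pick (phis n')) else [::].
pose phi k := pick (phis k).
have phisE n : phis n = map phi (iota 0 n).
  elim: n => // n IH; change (rcons (phis n) (phi n) = map phi (iota 0 n.+1)).
  by rewrite IH -addn1 iotaD map_cat cats1.
have phis_size n : size (phis n) = n by rewrite phisE size_map size_iota.
have phis_nth n i : (i < n)%N -> nth 0%N (phis n) i = phi i.
  by move=> iN; rewrite phisE (nth_map 0%N) ?size_iota // nth_iota.
have phisP n : uniq (phis n) /\ forall i, (i < n)%N -> s (phi i) = s1 i.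
  elim: n => [|n [u hs]]; first by [].
  have [] := pickP _ u; first by rewrite phis_size => i iN; rewrite phis_nth // hs.
  rewrite phis_size => sphi phi_new; split; first by rewrite /= rcons_uniq phi_new u.
  by move=> i; rewrite ltnS leq_eqVlt => /orP [/eqP ->|/hs].
have phi_new b : phi b \notin phis b.
  have [u hs] := phisP b; have [] // := pickP _ u.
  by rewrite phis_size => i iN; rewrite phis_nth // hs.
exists phi; last by move=> k; apply: (phisP k.+1).2.
move=> a b; wlog ab : a b / (a < b)%N => [W|].
  by case: (ltngtP a b) => // [/W|/W W' /esym/W']; [apply | move=> ->].
by move=> eab; have := phi_new b; rewrite phisE -eab map_f // mem_iota.
Qed.

End Embedding.

End Enumerations.

Definition in_image (f : nat -> nat) j := exists k, f k = j.

Definition preim_pick (f : nat -> nat) j := xget 0%N [set k | f k = j].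

Lemma preim_pickK f j : in_image f j -> f (preim_pick f j) = j.
Proof. by move=> h; have := xgetPex 0%N h. Qed.

Lemma preim_pick_f f k : injective f -> preim_pick f (f k) = k.
Proof. by move=> inj; apply: inj; apply: preim_pickK; exists k. Qed.

Section EnumerationDifference.
Variable R : realType.
Variables (S1 S : rigged R) (s1 s : nat -> circ R) (phi : nat -> nat).
Hypotheses (es1 : enumeration S1 s1) (es : enumeration S s) (S1S : rle S1 S).
Hypothesis S_fin : forall x, x <> circ1 R -> S x <> None.
Hypotheses (phi_inj : injective phi) (s_phi : forall k, s (phi k) = s1 k).

Lemma size_filter_notin_image x m m1 (l : seq nat) :
  S1 x = Some m1 -> uniq l -> size l = m -> (forall j, s j = x <-> j \in l) ->
  size [seq j <- l | ~~ `[< in_image phi j >]] = (m - m1)%N.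
Proof.
move=> S1x ul sl hl; have := es1 x; rewrite S1x => -[l1 [ul1 sl1 hl1]].
have l_phi : perm_eq [seq j <- l | `[< in_image phi j >]] (map phi l1).
  apply: uniq_perm; rewrite ?filter_uniq ?map_inj_uniq // => j.
  rewrite mem_filter; apply/andP/mapP.
    move=> [/asboolP [k <-] kl]; exists k => //.
    by apply/(hl1 k).1; rewrite -s_phi; exact/(hl _).2.
  move=> [k kl1 ->]; split; first by apply/asboolP; exists k.
  by apply/(hl (phi k)).1; rewrite s_phi; exact/(hl1 k).2.
have := count_predC (fun j => `[< in_image phi j >]) l.
by rewrite -size_filter (perm_size l_phi) size_map sl1 sl size_filter => <-; rewrite addKn.
Qed.

(* [u] lists the points of [S - S1]: each index [j] of [s] outside the range
   of [phi] is moved to position [g j], and every other position holds [1]. *)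
Lemma enum_rsub (u : nat -> circ R) (g : nat -> nat) :
  (forall N, exists2 i, (N <= i)%N & u i = circ1 R) ->
  (forall a b, ~ in_image phi a -> ~ in_image phi b -> g a = g b -> a = b) ->
  (forall j, ~ in_image phi j -> u (g j) = s j) ->
  (forall i, u i <> circ1 R -> exists2 j, ~ in_image phi j & g j = i) ->
  enumeration (rsub S S1) u.
Proof.
move=> u1 g_inj u_g u_cover x; rewrite /rsub; case: pselect => [x1|x1] /=.
  by move=> N; have [i Ni ui] := u1 N; exists i; rewrite ?x1.
case Sx: (S x) (S_fin x1) => [m|] // _; have := S1S x; rewrite Sx.
case S1x: (S1 x) => [m1|] //= _; have := es x; rewrite Sx => -[l [ul sl hl]].
have notin_image j : j \in [seq j <- l | ~~ `[< in_image phi j >]] -> ~ in_image phi j.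
  by rewrite mem_filter => /andP [/asboolPn].
exists (map g [seq j <- l | ~~ `[< in_image phi j >]]); split.
- rewrite map_inj_in_uniq ?filter_uniq // => a b /notin_image a_phi /notin_image.
  exact: g_inj.
- by rewrite size_map (size_filter_notin_image S1x ul sl hl).
move=> i; split => [uix|/mapP [j jE ->]].
  have [j j_phi gji] : exists2 j, ~ in_image phi j & g j = i by apply: u_cover; rewrite uix.
  apply/mapP; exists j => //; rewrite mem_filter; apply/andP; split.
    exact/asboolPn.
  by apply/(hl j).1; rewrite -u_g // gji.
rewrite u_g; last exact: notin_image.
by apply/(hl j).2; move: jE; rewrite mem_filter => /andP [].
Qed.

End EnumerationDifference.

Fixpoint oiter (g : nat -> option nat) (j n : nat) : option nat :=
  if n is n'.+1 then obind g (oiter g j n') else Some j.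

Section PartialIteration.
Variable g : nat -> option nat.

Lemma oiterD j n m : oiter g j (n + m) = obind (fun c => oiter g c m) (oiter g j n).
Proof.
elim: m => [|m IH]; first by rewrite addn0; case: (oiter g j n).
by rewrite addnS /= IH; case: (oiter g j n).
Qed.

Lemma oiter_dead e m : g e = None -> oiter g e m.+1 = None.
Proof. by move=> ge; elim: m => [|m IH] /=; rewrite ?ge // -/(oiter g e m.+1) IH. Qed.

Lemma oiter_dead_leq j a b e e' :
  oiter g j a = Some e -> g e = None -> oiter g j b = Some e' -> (b <= a)%N.
Proof.
move=> ha ge hb; rewrite leqNgt; apply/negP => ab.
move: hb; rewrite -(subnKC (ltnW ab)) oiterD ha /=.
by move: ab; rewrite -subn_gt0; case: (b - a)%N => // m _; rewrite oiter_dead.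
Qed.

Lemma oiter_dead_uniq j a b e e' : g e = None -> g e' = None ->
  oiter g j a = Some e -> oiter g j b = Some e' -> a = b.
Proof.
move=> ge ge' ha hb.
by apply/eqP; rewrite eqn_leq (oiter_dead_leq hb ge' ha) (oiter_dead_leq ha ge hb).
Qed.

Lemma oiterS_inv j n c :
  oiter g j n.+1 = Some c -> exists2 d, oiter g j n = Some d & g d = Some c.
Proof. by rewrite /=; case: (oiter g j n) => // d; exists d. Qed.

Lemma oiter_subn j n n' c c' : (n <= n')%N ->
  oiter g j n = Some c -> oiter g j n' = Some c' -> oiter g c (n' - n) = Some c'.
Proof. by move=> nn' h; rewrite -{1}(subnKC nn') oiterD h. Qed.

Definition trajectory j n := pmap (oiter g j) (iota 0 n).

Lemma trajectoryS j n c :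
  oiter g j n = Some c -> trajectory j n.+1 = rcons (trajectory j n) c.
Proof. by move=> h; rewrite /trajectory -addn1 iotaD pmap_cat /= h cats1. Qed.

Lemma uniq_trajectory j n :
  (forall a b c, oiter g j a = Some c -> oiter g j b = Some c -> a = b) ->
  uniq (trajectory j n).
Proof.
move=> inj; rewrite /trajectory; elim: (iota 0 n) (iota_uniq 0 n) => //= x L IH.
case/andP=> xL uL; case h: (oiter g j x) => [c|]; last exact: IH.
rewrite /= IH // andbT mem_pmap; apply/mapP => -[y yL hy].
by move: xL; rewrite (inj _ _ _ h (esym hy)) yL.
Qed.

Lemma mem_trajectory j n c : c \in trajectory j n -> exists m, oiter g j m = Some c.
Proof. by rewrite mem_pmap => /mapP [m _ h]; exists m. Qed.

End PartialIteration.

Lemma oiter_inverse (f g : nat -> option nat) j n c :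
  (forall b c, f b = Some c -> g c = Some b) ->
  oiter f j n = Some c -> oiter g c n = Some j.
Proof.
move=> fg; elim: n c => [|n IH] c; first by case=> ->.
case/oiterS_inv => d fd dc.
by rewrite -add1n oiterD /= (fg _ _ dc) /=; exact: IH.
Qed.

Section Matching.
Variable R : realType.
Variables (s1 t1 s t : nat -> circ R) (phi psi : nat -> nat).
Hypotheses (phi_inj : injective phi) (psi_inj : injective psi).
Hypotheses (s_phi : forall k, s (phi k) = s1 k) (t_psi : forall k, t (psi k) = t1 k).

(* The index [j] is linked to [phi k] when [t j = t1 k]: the pair [(s1 k, t1 k)]
   joins [t j] to [s (phi k) = s1 k]. *)
Definition next j := if pselect (in_image psi j) then Some (phi (preim_pick psi j)) else None.
Definition prev j := if pselect (in_image phi j) then Some (psi (preim_pick phi j)) else None.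

Lemma next_prev b c : next b = Some c -> prev c = Some b.
Proof.
rewrite /next /prev; case: pselect => // psi_b /Some_inj <-.
case: pselect => [phi_c|[]]; last by exists (preim_pick psi b).
by rewrite preim_pick_f // preim_pickK.
Qed.

Lemma prev_next b c : prev c = Some b -> next b = Some c.
Proof.
rewrite /next /prev; case: pselect => // phi_c /Some_inj <-.
case: pselect => [psi_b|[]]; last by exists (preim_pick phi c).
by rewrite preim_pick_f // preim_pickK.
Qed.

Lemma next_in_image b c : next b = Some c -> in_image phi c.
Proof. by rewrite /next; case: pselect => // psi_b /Some_inj <-; exists (preim_pick psi b). Qed.

Lemma nextN b : next b = None <-> ~ in_image psi b.
Proof. by rewrite /next; case: pselect. Qed.

Definition source j := ~ in_image phi j.
Definition path_from j b := exists n, oiter next j n = Some b.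
Definition reached e := exists2 j, source j & path_from j e.
Definition halts j := exists2 e, path_from j e & next e = None.

Lemma oiter_next_prev j n b : oiter next j n = Some b -> oiter prev b n = Some j.
Proof. by apply: oiter_inverse; exact: next_prev. Qed.

Lemma oiter_prev_next j n b : oiter prev j n = Some b -> oiter next b n = Some j.
Proof. by apply: oiter_inverse => b' c /prev_next. Qed.

Lemma path_from_trans a b c : path_from a b -> path_from b c -> path_from a c.
Proof. by move=> [n ab] [m bc]; exists (n + m)%N; rewrite oiterD ab. Qed.

Lemma source_unreached j c n : oiter next c n.+1 = Some j -> ~ source j.
Proof. by move=> /oiterS_inv [d _ /next_in_image phi_j]; apply. Qed.

Lemma oiter_source_uniq j j' n n' b : source j -> source j' ->
  oiter next j n = Some b -> oiter next j' n' = Some b -> j = j'.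
Proof.
move=> sj sj'; wlog nn' : j j' n n' sj sj' / (n <= n')%N => [W h h'|h h'].
  by case: (leqP n n') => [|/ltnW] nn'; [exact: W h h' | apply/esym; exact: W h' h].
have := oiter_subn nn' (oiter_next_prev h) (oiter_next_prev h').
by case: (n' - n)%N => [[]|d /oiter_prev_next /source_unreached] //.
Qed.

Lemma oiter_next_inj j a b c : source j ->
  oiter next j a = Some c -> oiter next j b = Some c -> a = b.
Proof.
move=> sj; wlog ab : a b / (a <= b)%N => [W ha hb|ha hb].
  by case: (leqP a b) => [|/ltnW] ab; [exact: W | apply/esym; exact: W].
have := oiter_subn ab (oiter_next_prev ha) (oiter_next_prev hb).
move: ab; rewrite leq_eqVlt => /orP [/eqP //|ab].
by rewrite -(subnKC ab) addSn -addnS addKn => /oiter_prev_next /source_unreached.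
Qed.

Lemma oiter_prev_inj e a b c : next e = None ->
  oiter prev e a = Some c -> oiter prev e b = Some c -> a = b.
Proof.
move=> ne /oiter_prev_next ha /oiter_prev_next hb.
exact: (oiter_dead_uniq ne ne ha hb).
Qed.

Lemma prev_total e : ~ reached e -> forall n, exists b, oiter prev e n = Some b.
Proof.
move=> nre; elim=> [|n [b eb]]; first by exists e.
rewrite /= eb /=; case pb: (prev b) => [c|]; first by exists c.
exfalso; apply: nre; exists b; last by exists n; exact: oiter_prev_next.
by move: pb; rewrite /prev; case: pselect.
Qed.

Lemma next_total j : ~ halts j -> forall n, exists b, oiter next j n = Some b.
Proof.
move=> nj; elim=> [|n [b jb]]; first by exists j.
rewrite /= jb /=; case nb: (next b) => [c|]; first by exists c.
by exfalso; apply: nj; exists b => //; exists n.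
Qed.

Definition sink j := xget 0%N [set e | path_from j e /\ next e = None].

Lemma sinkP j : halts j -> path_from j (sink j) /\ next (sink j) = None.
Proof.
move=> [e je ne]; apply: (xgetPex 0%N (P := [set e | path_from j e /\ next e = None])).
by exists e.
Qed.

Lemma sink_eq j e : path_from j e -> next e = None -> sink j = e.
Proof.
move=> [n je] ne; have [[m js] ns] : path_from j (sink j) /\ next (sink j) = None.
  by apply: sinkP; exists e => //; exists n.
by have mn := oiter_dead_uniq ns ne js je; move: js; rewrite mn je => /Some_inj.
Qed.

Definition source_of e := xget 0%N [set j | source j /\ path_from j e].

Lemma source_ofP e : reached e -> source (source_of e) /\ path_from (source_of e) e.
Proof.
move=> [j sj je]; apply: (xgetPex 0%N (P := [set j | source j /\ path_from j e])).
by exists j.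
Qed.

Lemma source_of_eq j e : source j -> path_from j e -> source_of e = j.
Proof.
move=> sj [n je]; have [sj' [n' je']] : source (source_of e) /\ path_from (source_of e) e.
  by apply: source_ofP; exists j => //; exists n.
exact: (oiter_source_uniq sj' sj je' je).
Qed.

Definition cost j := cdist (s j) (t j).
Definition cost1 k := cdist (s1 k) (t1 k).
Definition weight b := cost b + (if pselect (in_image psi b) then cost1 (preim_pick psi b) else 0).

Lemma cost_ge0 j : 0 <= cost j. Proof. exact: cdist_ge0. Qed.
Lemma cost1_ge0 k : 0 <= cost1 k. Proof. exact: cdist_ge0. Qed.

Lemma cost_le_weight j : cost j <= weight j.
Proof. by rewrite /weight lerDl; case: pselect => // psi_j; exact: cost1_ge0. Qed.

Lemma next_cost b c : next b = Some c -> cdist (s b) (s c) <= weight b.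
Proof.
rewrite /next /weight; case: pselect => // psi_b /Some_inj <-.
apply: le_trans (cdist_triangle _ (t b) _) _; rewrite lerD2l.
by rewrite s_phi -{1}(preim_pickK psi_b) t_psi /cost1 cdistC.
Qed.

Lemma prev_cost b c : prev b = Some c -> cdist (s b) (t c) + cost c <= weight c.
Proof.
rewrite /prev /weight; case: (pselect (in_image phi b)) => // phi_b /Some_inj <-.
case: pselect => [psi_c|[]]; last by exists (preim_pick phi b).
by rewrite preim_pick_f // addrC lerD2l -{1}(preim_pickK phi_b) s_phi t_psi.
Qed.

Lemma trajectory_next_cost j n e : oiter next j n = Some e ->
  cdist (s j) (s e) <= \sum_(b <- trajectory next j n) weight b.
Proof.
elim: n e => [e [<-]|n IH e /oiterS_inv [d jd de]]; first by rewrite cdistxx big_nil.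
rewrite (trajectoryS jd) -cats1 big_cat big_seq1 /=.
by apply: le_trans (cdist_triangle _ (s d) _) _; apply: lerD; [exact: IH | exact: next_cost].
Qed.

Lemma trajectory_prev_cost e n b : oiter prev e n = Some b ->
  cdist (t e) (s b) <= \sum_(c <- trajectory prev e n.+1) weight c.
Proof.
elim: n b => [b [<-]|n IH b eb].
  by rewrite /trajectory /= big_seq1 cdistC; exact: cost_le_weight.
have [d ed db] := oiterS_inv eb.
rewrite (trajectoryS eb) -cats1 big_cat big_seq1 /=.
apply: le_trans (cdist_triangle _ (s d) _) _; apply: lerD; first exact: IH.
apply: le_trans (cdist_triangle _ (t b) _) (le_trans _ (prev_cost db)).
by rewrite /cost [cdist (s b) _]cdistC.
Qed.

(* Even positions [2 j] carry the path starting at the source [j] (paired with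
   its sink, or with [1] if the path is infinite); odd positions [2 e + 1] pair
   a sink [e] that no source reaches with [1]. *)
Definition diff_s i := if odd i then circ1 R
  else if pselect (in_image phi i./2) then circ1 R else s i./2.

Definition diff_t i := if odd i then
    (if pselect (next i./2 = None /\ ~ reached i./2) then t i./2 else circ1 R)
  else (if pselect (source i./2 /\ halts i./2) then t (sink i./2) else circ1 R).

Definition sink_slot e := if pselect (reached e) then (source_of e).*2 else e.*2.+1.

Lemma diff_s_double j : source j -> diff_s j.*2 = s j.
Proof. by rewrite /diff_s odd_double half_double; case: pselect. Qed.

Lemma diff_s_cover i : diff_s i <> circ1 R -> exists2 j, source j & j.*2 = i.
Proof.
rewrite /diff_s; case oi: (odd i) => //; case: pselect => // phi_i _.
by exists i./2 => //; rewrite -[RHS]odd_double_half oi.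
Qed.

Lemma diff_t_sink_slot e : next e = None -> diff_t (sink_slot e) = t e.
Proof.
move=> ne; rewrite /diff_t /sink_slot; case: (pselect (reached e)) => [re|nre].
  have [sj je] := source_ofP re.
  rewrite odd_double half_double; case: pselect => [sh|[]]; last by split; last exists e.
  by rewrite (sink_eq je ne).
by rewrite /= odd_double uphalf_double; case: pselect => // -[].
Qed.

Lemma sink_slot_inj a b : next a = None -> next b = None ->
  sink_slot a = sink_slot b -> a = b.
Proof.
move=> na nb; rewrite /sink_slot.
case: (pselect (reached a)) => [ra|nra]; case: (pselect (reached b)) => [rb|nrb].
- move/double_inj => ab; have [_ ja] := source_ofP ra; have [_ jb] := source_ofP rb.
  by rewrite -(sink_eq ja na) ab (sink_eq jb nb).
- by move/(congr1 odd); rewrite /= !odd_double.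
- by move/(congr1 odd); rewrite /= !odd_double.
- by move=> /succn_inj /double_inj.
Qed.

Lemma diff_t_cover i : diff_t i <> circ1 R -> exists2 e, next e = None & sink_slot e = i.
Proof.
rewrite /diff_t /sink_slot; case oi: (odd i).
  case: pselect => // -[ne nre] _; exists i./2 => //.
  case: pselect => [re|nre']; first by case: nre.
  by rewrite -[RHS]odd_double_half oi.
case: pselect => // -[sj /sinkP [je ne]] _; exists (sink i./2) => //.
case: pselect => [re|[]]; last by exists i./2.
by rewrite (source_of_eq sj je) -[RHS]odd_double_half oi.
Qed.

Lemma diff_s_one N : exists2 i, (N <= i)%N & diff_s i = circ1 R.
Proof. by exists N.*2.+1; [rewrite -addnn -addSn leq_addl | rewrite /diff_s /= odd_double]. Qed.

Lemma diff_t_one N : exists2 i, (N <= i)%N & diff_t i = circ1 R.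
Proof.
have [k] := inj_nat_avoid (iota 0 N) phi_inj.
rewrite mem_iota add0n /= -leqNgt => Nk; exists (phi k).*2.
  by apply: leq_trans Nk _; rewrite -addnn leq_addr.
by rewrite /diff_t odd_double half_double; case: pselect => // -[[]]; exists k.
Qed.

Lemma enumeration_diff_s (S1 S : rigged R) :
  enumeration S1 s1 -> enumeration S s -> rle S1 S ->
  (forall x, x <> circ1 R -> S x <> None) -> enumeration (rsub S S1) diff_s.
Proof.
move=> es1 es S1S S_fin; apply: (enum_rsub es1 es S1S S_fin phi_inj s_phi (g := double)).
- exact: diff_s_one.
- by move=> a b _ _; exact: double_inj.
- exact: diff_s_double.
- exact: diff_s_cover.
Qed.

Lemma enumeration_diff_t (T1 T : rigged R) :
  enumeration T1 t1 -> enumeration T t -> rle T1 T ->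
  (forall x, x <> circ1 R -> T x <> None) -> enumeration (rsub T T1) diff_t.
Proof.
move=> et1 et T1T T_fin; apply: (enum_rsub et1 et T1T T_fin psi_inj t_psi (g := sink_slot)).
- exact: diff_t_one.
- by move=> a b /nextN na /nextN nb; exact: sink_slot_inj.
- by move=> e /nextN; exact: diff_t_sink_slot.
- by move=> i /diff_t_cover [e /nextN ne ei]; exists e.
Qed.

Hypothesis s_tail : forall e, 0 < e ->
  exists G : seq nat, forall j, e <= cdist (s j) (circ1 R) -> j \in G.

Lemma tail_close (g : nat -> nat) e : 0 < e -> injective g ->
  exists n, cdist (s (g n)) (circ1 R) < e.
Proof.
move=> e0 g_inj; have [G sG] := s_tail e0; have [n gn] := inj_nat_avoid G g_inj.
by exists n; rewrite ltNge; apply: contra gn; exact: sG.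
Qed.

Lemma halting_path_cost j : source j -> halts j -> exists L, [/\ uniq L,
  forall b, b \in L -> path_from j b & cdist (s j) (t (sink j)) <= \sum_(b <- L) weight b].
Proof.
move=> sj /sinkP [[m jm] nm]; exists (trajectory next j m.+1); split.
- by apply: uniq_trajectory => a b c; exact: oiter_next_inj.
- by move=> b /mem_trajectory.
rewrite (trajectoryS jm) -cats1 big_cat big_seq1 /=.
apply: le_trans (cdist_triangle _ (s (sink j)) _) _.
by apply: lerD; [exact: trajectory_next_cost | exact: cost_le_weight].
Qed.

(* An infinite path runs through infinitely many distinct indices of [s],
   so it comes arbitrarily close to [1]. *)
Lemma infinite_path_cost j e : source j -> ~ halts j -> 0 < e -> exists L, [/\ uniq L,
  forall b, b \in L -> path_from j b & cdist (s j) (circ1 R) <= \sum_(b <- L) weight b + e].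
Proof.
move=> sj nj e0; have [g jg] := choice (next_total nj).
have g_inj : injective g by move=> a b gab; apply: (oiter_next_inj sj (jg a)); rewrite gab.
have [n gn] := tail_close e0 g_inj; exists (trajectory next j n); split.
- by apply: uniq_trajectory => a b c; exact: oiter_next_inj.
- by move=> b /mem_trajectory.
apply: le_trans (cdist_triangle _ (s (g n)) _) _.
by apply: lerD; [exact: trajectory_next_cost | exact: ltW].
Qed.

Lemma unreached_sink_cost e eps : next e = None -> ~ reached e -> 0 < eps -> exists L,
  [/\ uniq L, forall b, b \in L -> path_from b e &
      cdist (t e) (circ1 R) <= \sum_(b <- L) weight b + eps].
Proof.
move=> ne nre eps0; have [g eg] := choice (prev_total nre).
have g_inj : injective g by move=> a b gab; apply: (oiter_prev_inj ne (eg a)); rewrite gab.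
have [n gn] := tail_close eps0 g_inj; exists (trajectory prev e n.+1); split.
- by apply: uniq_trajectory => a b c; exact: oiter_prev_inj.
- by move=> b /mem_trajectory [k /oiter_prev_next]; exists k.
apply: le_trans (cdist_triangle _ (s (g n)) _) _.
by apply: lerD; [exact: trajectory_prev_cost | exact: ltW].
Qed.

Definition on_slot i b := if odd i
  then [/\ next i./2 = None, ~ reached i./2 & path_from b i./2]
  else source i./2 /\ path_from i./2 b.

Lemma slot_cost i e : 0 < e -> exists L, [/\ uniq L, forall b, b \in L -> on_slot i b &
  cdist (diff_s i) (diff_t i) <= \sum_(b <- L) weight b + e].
Proof.
move=> e0; have trivial_slot : cdist (circ1 R) (circ1 R) <= \sum_(b <- [::]) weight b + e.
  by rewrite cdistxx big_nil add0r ltW.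
rewrite /diff_s /diff_t /on_slot; case: (odd i).
  case: pselect => [[ne nre]|nh]; last by exists [::].
  have [L [uL Le Lcost]] := unreached_sink_cost ne nre e0.
  by exists L; split => // [b /Le|]; [|rewrite cdistC].
case: pselect => [phi_i|sj].
  by case: pselect => [h|nh]; [case: h.1 | exists [::]].
case: pselect => [h|nh].
  have [L [uL Lj Lcost]] := halting_path_cost sj h.2.
  by exists L; split => // [b /Lj|]; [|rewrite ler_wpDr // ltW].
have [L [uL Lj Lcost]] := infinite_path_cost sj (fun hj => nh (conj sj hj)) e0.
by exists L; split => // b /Lj.
Qed.

Lemma on_slot_disjoint i i' b : on_slot i b -> on_slot i' b -> i = i'.
Proof.
have half_eq : odd i = odd i' -> i./2 = i'./2 -> i = i'.
  by move=> oii' hii'; rewrite -(odd_double_half i) -(odd_double_half i') oii' hii'.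
rewrite /on_slot; case oi: (odd i); case oi': (odd i').
- move=> [ne _ [n bj]] [ne' _ [n' bj']]; apply: half_eq; first by rewrite oi oi'.
  have nn := oiter_dead_uniq ne ne' bj bj'.
  by move: bj; rewrite nn bj' => /Some_inj.
- by move=> [_ nre bj] [sj' jb]; case: nre; exists i'./2 => //; exact: path_from_trans jb bj.
- by move=> [sj jb] [_ nre bj]; case: nre; exists i./2 => //; exact: path_from_trans jb bj.
- move=> [sj [n jb]] [sj' [n' jb']]; apply: half_eq; first by rewrite oi oi'.
  exact: (oiter_source_uniq sj sj' jb jb').
Qed.

Lemma partial_cost_le e N : 0 < e -> exists F, [/\ uniq F,
  forall b, b \in F -> exists2 i, (i < N)%N & on_slot i b &
  \sum_(0 <= i < N) cdist (diff_s i) (diff_t i) <= \sum_(b <- F) weight b + N%:R * e].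
Proof.
move=> e0; elim: N => [|N [F [uF Fslot Fcost]]].
  by exists [::]; split => //; rewrite big_geq // big_nil mul0r addr0.
have [L [uL Lslot Lcost]] := slot_cost N e0; exists (F ++ L); split.
- rewrite cat_uniq uF uL andbT; apply/hasPn => b bL; apply/negP => bF.
  have [i iN ib] := Fslot b bF.
  by move: iN; rewrite (on_slot_disjoint ib (Lslot b bL)) ltnn.
- move=> b; rewrite mem_cat => /orP [/Fslot [i iN ib]|/Lslot]; last by exists N.
  by exists i => //; exact: ltnW.
rewrite big_nat_recr //= big_cat /= -natr1 mulrDl mul1r.
move: Fcost Lcost; set a := \sum_(0 <= i < N) _; set b := \sum_(b <- F) _.
by set c := \sum_(b <- L) _; set d := cdist _ _; lra.
Qed.

Lemma big_weight_le F : uniq F ->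
  ((\sum_(b <- F) weight b)%:E <= \sum_(j <oo) (cost j)%:E + \sum_(k <oo) (cost1 k)%:E)%E.
Proof.
move=> uF; rewrite /weight big_split /= EFinD; apply: leeD.
  exact: big_uniq_le_nneseries cost_ge0 uF.
have -> : \sum_(b <- F) (if pselect (in_image psi b) then cost1 (preim_pick psi b) else 0)
    = \sum_(b <- F | `[< in_image psi b >]) cost1 (preim_pick psi b).
  rewrite [RHS]big_mkcond; apply: eq_bigr => b _.
  by case: pselect => psi_b; [rewrite asboolT | rewrite asboolF].
rewrite -big_filter -(big_map (preim_pick psi) xpredT).
apply: big_uniq_le_nneseries cost1_ge0 _.
rewrite map_inj_in_uniq ?filter_uniq // => a b.
rewrite !mem_filter => /andP [/asboolP psi_a _] /andP [/asboolP psi_b _] ab.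
by rewrite -(preim_pickK psi_a) -(preim_pickK psi_b) ab.
Qed.

Lemma diff_cost_le :
  (\sum_(i <oo) (cdist (diff_s i) (diff_t i))%:E <=
   \sum_(j <oo) (cost j)%:E + \sum_(k <oo) (cost1 k)%:E)%E.
Proof.
apply: nneseries_le_ub => [i|N]; first exact: cdist_ge0.
apply/lee_addgt0Pr => e e0.
have eN0 : 0 < e / N.+1%:R by rewrite divr_gt0 // ltr0Sn.
have [F [uF _ Fcost]] := partial_cost_le N eN0.
have Ne : N%:R * (e / N.+1%:R) <= e.
  rewrite mulrA ler_pdivrMr ?ltr0Sn // -natr1 mulrDr mulr1 mulrC lerDl ltW //.
apply: le_trans (_ : ((\sum_(b <- F) weight b) + N%:R * (e / N.+1%:R))%:E <= _)%E.
  by rewrite lee_fin.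
by rewrite EFinD leeD // ?big_weight_le // lee_fin.
Qed.

End Matching.

Section Tails.
Variable R : realType.

Lemma in_Soo_fin (S : rigged R) x : in_Soo S -> x <> circ1 R -> S x <> None.
Proof. by move=> [_ _ S_loc] x1; have [r r0 [_]] := S_loc x x1; apply; rewrite cdistxx. Qed.

Lemma enum_indices_finite (S : rigged R) (s s' : nat -> circ R) :
  enumeration S s -> (forall x, x <> circ1 R -> S x <> None) ->
  forall F : seq nat, exists G : seq nat, forall j,
    (exists2 j', j' \in F & s' j' = s j) -> s j <> circ1 R -> j \in G.
Proof.
move=> es S_fin; elim=> [|a F [G FG]]; first by exists [::] => j [].
case: (pselect (s' a = circ1 R)) => [a1|a1].
  exists G => j [j']; rewrite inE => /orP [/eqP -> <- //|j'F s'j] sj1.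
  by apply: FG => //; exists j'.
case Sa: (S (s' a)) (S_fin _ a1) => [m|] // _.
have := es (s' a); rewrite Sa => -[l [_ _ hl]].
exists (l ++ G) => j [j']; rewrite inE mem_cat => /orP [/eqP -> s'j|j'F s'j] sj1.
  by rewrite (hl j).1.
by rewrite FG ?orbT //; exists j'.
Qed.

(* A finite-cost matching with [1] leaves only finitely many terms of a
   nearly optimal enumeration far from [1]; every point of [S] occurs in it. *)
Lemma in_S1_tail (S : rigged R) (s : nat -> circ R) : in_S1 S -> enumeration S s ->
  forall e, 0 < e -> exists G : seq nat, forall j, e <= cdist (s j) (circ1 R) -> j \in G.
Proof.
move=> [SSoo S_cost] es e e0.
have [_ [s' [r [es' er ->]]] s'r_fin] := ereal_inf_lt S_cost.
have [F Fe] := nneseries_large_terms_finite (fun j => cdist_ge0 (s' j) (r j)) s'r_fin e0.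
have [G FG] := enum_indices_finite s' es (fun x => in_Soo_fin SSoo) F.
exists G => j ej; have sj1 : s j <> circ1 R by move=> sj; move: ej; rewrite sj cdistxx; lra.
apply: FG => //; have [j' s'j] : exists j', s' j' = s j.
  by apply: (enum_hit es') => Sj0; exact: (enum_notin es Sj0 erefl).
by exists j' => //; apply: Fe; rewrite (enum_rone er) s'j.
Qed.

End Tails.

Lemma le_ereal_inf_add (R : realType) (X : \bar R) (A B : set (\bar R)) :
  (forall a, A a -> (0 <= a)%E) -> (forall b, B b -> (0 <= b)%E) ->
  (forall a b, A a -> B b -> (X <= a + b)%E) ->
  (X <= ereal_inf A + ereal_inf B)%E.
Proof.
move=> A0 B0 XAB.
have iA : (0 <= ereal_inf A)%E by apply/ereal_infP.
have iB : (0 <= ereal_inf B)%E by apply/ereal_infP.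
have fin_case : ereal_inf A \is a fin_num -> ereal_inf B \is a fin_num ->
    (X <= ereal_inf A + ereal_inf B)%E.
  move=> fA fB; apply/lee_addgt0Pr => e e0; have e2 : 0 < e / 2 by rewrite divr_gt0.
  have [a Aa aA] := lb_ereal_inf_adherent e2 fA.
  have [b Bb bB] := lb_ereal_inf_adherent e2 fB.
  apply: le_trans (XAB a b Aa Bb) (le_trans (leeD (ltW aA) (ltW bB)) _).
  rewrite -(fineK fA) -(fineK fB) -!EFinD lee_fin; lra.
case: (ereal_inf A) iA fin_case => [a| |] // _.
  by case: (ereal_inf B) iB => [b| |] // _; [apply | rewrite addey ?leey].
by rewrite addye ?leey // gt_eqF // (lt_le_trans _ iB) // ltNye.
Qed.

Theorem mainTheorem6 (R : realType) (S1 S T1 T : rigged R) :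
  in_S1 S1 -> in_S1 S -> in_S1 T1 -> in_S1 T ->
  rle S1 S -> rle T1 T ->
  (rdist (rsub S S1) (rsub T T1) <= rdist S1 T1 + rdist S T)%E.
Proof.
move=> _ HS _ HT S1S T1T.
have matching_cost_ge0 (U V : rigged R) a :
    (exists s t, [/\ enumeration U s, enumeration V t &
       a = (\sum_(j <oo) (cdist (s j) (t j))%:E)%E]) -> (0 <= a)%E.
  by move=> [s [t [_ _ ->]]]; apply: nneseries_ge0 => n _ _; rewrite lee_fin cdist_ge0.
apply: le_ereal_inf_add => [a /matching_cost_ge0 | b /matching_cost_ge0 |] //.
move=> _ _ [s1 [t1 [es1 et1 ->]]] [s [t [es et ->]]].
have [phi phi_inj s_phi] := enum_embed es1 es S1S.
have [psi psi_inj t_psi] := enum_embed et1 et T1T.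
apply: le_trans (ereal_inf_lbound _) _.
  exists (diff_s s phi), (diff_t t phi psi); split => //.
    by apply: enumeration_diff_s => // x; exact: in_Soo_fin HS.1.
  by apply: enumeration_diff_t => // x; exact: in_Soo_fin HT.1.
by rewrite addeC; apply: diff_cost_le => //; exact: in_S1_tail HS es.
Qed.
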